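(* Let $N\ge 3$, $0\le p\le \lfloor N/2\rfloor-1$ and $\nu_1,\dots,\nu_{p+1}\in\mathbb C$. For $0\le k\le p$ put $H_{k+1,N-k}:=\tfrac12(E_{k+1,k+1}-E_{N-k,N-k})$, $H^{\mathcal R}_{k}:=H_{k+1,N-k}-H^{\mathcal P}_{k+1}$ and define the canonical extended Jordanian link $$\mathcal F_k(\nu):=\Big(\prod_{s=k+2}^{N-k-1}\exp\big(\xi\nu\,E_{k+1,s}\otimes E_{s,N-k}\,(1+\xi\nu E_{k+1,N-k})^{-1/2}\big)\Big)\exp\big(H_{k+1,N-k}\otimes\sigma_{k+1,N-k}(\nu)\big).$$ Then for each $k$, $$\mathcal F_k(\nu_{k+1})=\exp\big(H^{\mathcal R}_{k}\otimes\sigma_{k+1,N-k}(\nu_{k+1})\big)\,\mathcal F^{\mathcal P}_k(\nu_{k+1}),$$ and the canonical chain factorizes as $$\mathcal F_p(\nu_{p+1})\mathcal F_{p-1}(\nu_p)\cdots\mathcal F_0(\nu_1)=\Big(\prod_{k=0}^{p}\exp\big(H^{\mathcal R}_{k}\otimes\sigma_{k+1,N-k}(\nu_{k+1})\big)\Big)\,\mathcal F^{\mathcal P}_{p\prec0}(\nu_1,\dots,\nu_{p+1}),$$ where the factors $\exp(H^{\mathcal R}_{k}\otimes\sigma_{k+1,N-k}(\nu_{k+1}))$, $k=0,\dots,p$, commute pairwise.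
   Context: Work over $\mathbb C$ with $U=U(sl(N))$ (or $U(gl(N))$ where needed), whose generators $x\in sl(N)$ are primitive: $\Delta(x)=x\otimes1+1\otimes x$. $E_{ij}$ ($1\le i,j\le N$) denote the matrix units of $gl(N)$ and $I=\sum_{s=1}^N E_{ss}$. Let $\xi$ be a formal parameter; all computations take place in the $\xi$-adically completed algebras $U[[\xi]]$, $(U\otimes U)[[\xi]]$, $(U\otimes U\otimes U)[[\xi]]$, and exponentials and powers $(1+\xi c X)^{a}$ are the usual formal power series. For $i<j$ and $c\in\mathbb C$ set $\sigma_{ij}(c):=\ln(1+\xi cE_{ij})=\sum_{m\ge1}(-1)^{m+1}(\xi c)^mE_{ij}^m/m$. For $1\le k\le N$ set $H^{\mathcal P}_k:=E_{kk}-\frac1N I$. For $0\le k\le\lfloor N/2\rfloor-1$ and $\nu\in\mathbb C$ the peripheric link is $$\mathcal F^{\mathcal P}_k(\nu):=\Big(\prod_{s=k+2}^{N-k-1}\exp\big(\xi\nu\,E_{k+1,s}\otimes E_{s,N-k}\big)\Big)\exp\big(H^{\mathcal P}_{k+1}\otimes\sigma_{k+1,N-k}(\nu)\big)$$ (the factors of the product commute pairwise; an empty product is $1$), and the peripheric chain is $\mathcal F^{\mathcal P}_{p\prec0}(\nu_1,\dots,\nu_{p+1}):=\mathcal F^{\mathcal P}_p(\nu_{p+1})\mathcal F^{\mathcal P}_{p-1}(\nu_p)\cdots\mathcal F^{\mathcal P}_0(\nu_1)$. *)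

From HB Require Import structures.
From mathcomp Require Import all_boot all_order all_algebra.
Set Implicit Arguments. Unset Strict Implicit. Unset Printing Implicit Defensive.
Import Order.TTheory GRing.Theory Num.Theory.
Local Open Scope ring_scope.

(** Formal power series in the central formal parameter xi with coefficients
    in a (noncommutative) K-algebra A, represented by coefficient sequences:
    f represents  \sum_n f n xi^n. *)
Definition ps (A : Type) := nat -> A.

Section PowerSeries.
Variables (K : numFieldType) (A : algType K).

Definition ps_one : ps A := fun n => if n == 0%N then 1 else 0.

Definition ps_const (a : A) : ps A := fun n => if n == 0%N then a else 0.

Definition ps_mul (f g : ps A) : ps A :=
  fun n => \sum_(i < n.+1) f i * g (n - i)%N.

Definition ps_pow (f : ps A) (m : nat) : ps A := iter m (ps_mul f) ps_one.

Definition ps_shift (f : ps A) : ps A :=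
  fun n => if n is n'.+1 then f n' else 0.

Definition ps_lmul (a : A) (f : ps A) : ps A := fun n => a * f n.

(** exp f = \sum_m f^m / m!, for f with zero constant term (then only
    m <= n contributes to the coefficient of xi^n, so this is the usual
    xi-adically convergent exponential). *)
Definition ps_exp (f : ps A) : ps A :=
  fun n => \sum_(m < n.+1) (m`!%:R)^-1 *: ps_pow f m n.

Definition ps_prod (r : seq nat) (F : nat -> ps A) : ps A :=
  foldr (fun s acc => ps_mul (F s) acc) ps_one r.

(** sigma(c) = ln(1 + xi c y) = \sum_{m>=1} (-1)^(m+1) (xi c)^m y^m / m *)
Definition ps_ln1p (c : K) (y : A) : ps A :=
  fun n => if n == 0%N then 0
           else ((-1) ^+ n.+1 * c ^+ n / n%:R) *: y ^+ n.

Definition gbinom (a : K) (n : nat) : K :=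
  (\prod_(i < n) (a - i%:R)) / n`!%:R.

(** (1 + xi c y)^a = \sum_n binom(a,n) (xi c)^n y^n *)
Definition ps_binom (a c : K) (y : A) : ps A :=
  fun n => (gbinom a n * c ^+ n) *: y ^+ n.

End PowerSeries.

(** gl(N) commutation relations for a family E i j (1 <= i,j <= N, 1-based):
    [E_ij, E_kl] = delta_jk E_il - delta_li E_kj. *)
Definition gl_rel (K : numFieldType) (A : algType K) (N : nat)
  (E : nat -> nat -> A) : Prop :=
  forall i j k l, (0 < i <= N)%N -> (0 < j <= N)%N -> (0 < k <= N)%N ->
    (0 < l <= N)%N ->
    E i j * E k l - E k l * E i j =
      (if j == k then E i l else 0) - (if l == i then E k j else 0).

Definition fam_commute (K : numFieldType) (A : algType K) (N : nat)
  (X Y : nat -> nat -> A) : Prop :=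
  forall i j k l, (0 < i <= N)%N -> (0 < j <= N)%N -> (0 < k <= N)%N ->
    (0 < l <= N)%N -> X i j * Y k l = Y k l * X i j.

(** The setting: X i j stands for E_ij (x) 1 and Y i j for 1 (x) E_ij in
    U(gl(N)) (x) U(gl(N)).  All definitions below are the
    images of the paper's elements of (U (x) U)[[xi]] in A[[xi]]. *)
Section Links.
Variables (K : numFieldType) (A : algType K) (N : nat) (X Y : nat -> nat -> A).

Definition IX : A := \sum_(1 <= s < N.+1) X s s.

Definition HP (k : nat) : A := X k k - (N%:R : K)^-1 *: IX.

Definition Hc (k : nat) : A := (2%:R : K)^-1 *: (X k.+1 k.+1 - X (N - k) (N - k)).

Definition HR (k : nat) : A := Hc k - HP k.+1.

Definition exp_H_sigma (H : A) (k : nat) (nu : K) : ps A :=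
  ps_exp (ps_lmul H (ps_ln1p nu (Y k.+1 (N - k)))).

Definition FP_link (k : nat) (nu : K) : ps A :=
  ps_mul
    (ps_prod (iota (k + 2) ((N - k) - (k + 2)))
       (fun s => ps_exp (ps_shift (ps_const (nu *: (X k.+1 s * Y s (N - k)))))))
    (exp_H_sigma (HP k.+1) k nu).

Definition FP_chain (p : nat) (nu : nat -> K) : ps A :=
  ps_prod (rev (iota 0 p.+1)) (fun k => FP_link k (nu k.+1)).

Definition F_link (k : nat) (nu : K) : ps A :=
  ps_mul
    (ps_prod (iota (k + 2) ((N - k) - (k + 2)))
       (fun s => ps_exp (ps_shift
          (ps_lmul (nu *: (X k.+1 s * Y s (N - k)))
                   (ps_binom (- (2%:R : K)^-1) nu (Y k.+1 (N - k)))))))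
    (exp_H_sigma (Hc k) k nu).

Definition F_chain (p : nat) (nu : nat -> K) : ps A :=
  ps_prod (rev (iota 0 p.+1)) (fun k => F_link k (nu k.+1)).

End Links.

From HB Require Import structures.
From mathcomp Require Import all_boot all_order all_algebra.
From mathcomp Require Import boolp zify ring.
Set Implicit Arguments. Unset Strict Implicit. Unset Printing Implicit Defensive.
Import Order.TTheory GRing.Theory Num.Theory.
Local Open Scope ring_scope.

(* Split H_{k+1,N-k} = HR_k + HP_{k+1}; the two summands commute, so
   exp(H_{k+1,N-k} (x) sigma) = exp(HR_k (x) sigma) exp(HP_{k+1} (x) sigma).
   HR_k commutes with the second tensor factor and [HR_k, E_{k+1,s}] = -E_{k+1,s}/2,
   so conjugation by exp(HR_k (x) sigma) turns each peripheric factor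
   exp(xi nu E_{k+1,s} (x) E_{s,N-k}) into the canonical one, carrying
   exp(-sigma/2) = (1 + xi nu E_{k+1,N-k})^(-1/2).  Finally the HR_k lie in the
   Cartan subalgebra, commute with each other and with every later peripheric
   link, so in the chain they can all be collected on the left. *)

Section FormalPowerSeries.
Variables (K : numFieldType) (A : algType K).

Record fps := FPS { fcoef : nat -> A }.
HB.instance Definition _ := gen_eqMixin fps.
HB.instance Definition _ := gen_choiceMixin fps.

Lemma fps_ext (f g : fps) : fcoef f =1 fcoef g -> f = g.
Proof. by case: f => f; case: g => g /= /funext ->. Qed.

Definition fps_add (f g : fps) := FPS (fun n => fcoef f n + fcoef g n).
Definition fps_opp (f : fps) := FPS (fun n => - fcoef f n).

Lemma fps_addA : associative fps_add.
Proof. by move=> f g h; apply: fps_ext => n /=; rewrite addrA. Qed.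
Lemma fps_addC : commutative fps_add.
Proof. by move=> f g; apply: fps_ext => n /=; rewrite addrC. Qed.
Lemma fps_add0 : left_id (FPS (fun=> 0)) fps_add.
Proof. by move=> f; apply: fps_ext => n /=; rewrite add0r. Qed.
Lemma fps_addN : left_inverse (FPS (fun=> 0)) fps_opp fps_add.
Proof. by move=> f; apply: fps_ext => n /=; rewrite addNr. Qed.

HB.instance Definition _ :=
  GRing.isZmodule.Build fps fps_addA fps_addC fps_add0 fps_addN.

Definition fps_mul (f g : fps) := FPS (ps_mul (fcoef f) (fcoef g)).

(* The coefficients of degree at most n of a product only involve the
   truncations to degree n, so the ring axioms are inherited from {poly A}. *)
Definition trunc_poly (n : nat) (f : fps) : {poly A} := \poly_(i < n.+1) fcoef f i.

Lemma coef_trunc_poly n f i : (i <= n)%N -> (trunc_poly n f)`_i = fcoef f i.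
Proof. by move=> le_in; rewrite coef_poly ltnS le_in. Qed.

Lemma coef_poly_mul (P Q : {poly A}) (f g : fps) n :
    {in [pred i | i <= n]%N, forall i, P`_i = fcoef f i} ->
    {in [pred i | i <= n]%N, forall i, Q`_i = fcoef g i} ->
  (P * Q)`_n = fcoef (fps_mul f g) n.
Proof.
move=> eP eQ; rewrite coefM; apply: eq_bigr => i _.
by rewrite eP ?eQ ?inE ?leq_subr // -ltnS.
Qed.

Lemma coef_trunc_poly_le n m f : (m <= n)%N ->
  {in [pred i | i <= m]%N, forall i, (trunc_poly n f)`_i = fcoef f i}.
Proof. by move=> le_mn i /[!inE] le_im; rewrite coef_trunc_poly // (leq_trans le_im). Qed.

Lemma fps_mulA : associative fps_mul.
Proof.
move=> f g h; apply: fps_ext => n.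
rewrite -(@coef_poly_mul (trunc_poly n f) (trunc_poly n g * trunc_poly n h));
  last 2 first.
- exact: coef_trunc_poly_le.
- by move=> m /[!inE] le_mn; apply: coef_poly_mul; apply: coef_trunc_poly_le.
rewrite mulrA (@coef_poly_mul _ _ (fps_mul f g) h) //.
- by move=> m /[!inE] le_mn; apply: coef_poly_mul; apply: coef_trunc_poly_le.
- exact: coef_trunc_poly_le.
Qed.

Lemma fps_mul1r : left_id (FPS (ps_one A)) fps_mul.
Proof.
move=> f; apply: fps_ext => n; rewrite -(@coef_poly_mul 1 (trunc_poly n f)).
- by rewrite mul1r coef_trunc_poly.
- by move=> i _; rewrite coefC.
- exact: coef_trunc_poly_le.
Qed.

Lemma fps_mulr1 : right_id (FPS (ps_one A)) fps_mul.
Proof.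
move=> f; apply: fps_ext => n; rewrite -(@coef_poly_mul (trunc_poly n f) 1).
- by rewrite mulr1 coef_trunc_poly.
- exact: coef_trunc_poly_le.
- by move=> i _; rewrite coefC.
Qed.

Lemma fps_mulDl : left_distributive fps_mul fps_add.
Proof.
move=> f g h; apply: fps_ext => n; rewrite /= /ps_mul -big_split.
by apply: eq_bigr => i _; rewrite mulrDl.
Qed.

Lemma fps_mulDr : right_distributive fps_mul fps_add.
Proof.
move=> f g h; apply: fps_ext => n; rewrite /= /ps_mul -big_split.
by apply: eq_bigr => i _; rewrite mulrDr.
Qed.

HB.instance Definition _ :=
  GRing.Zmodule_isPzRing.Build fps fps_mulA fps_mul1r fps_mulr1 fps_mulDl fps_mulDr.

Definition fps_scale (c : K) (f : fps) := FPS (fun n => c *: fcoef f n).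

Lemma fps_scaleA a b f : fps_scale a (fps_scale b f) = fps_scale (a * b) f.
Proof. by apply: fps_ext => n; rewrite /= scalerA. Qed.
Lemma fps_scale1 : left_id 1 fps_scale.
Proof. by move=> f; apply: fps_ext => n; rewrite /= scale1r. Qed.
Lemma fps_scaleDr : right_distributive fps_scale +%R.
Proof. by move=> a f g; apply: fps_ext => n; rewrite /= scalerDr. Qed.
Lemma fps_scaleDl f : {morph fps_scale^~ f : a b / a + b}.
Proof. by move=> a b; apply: fps_ext => n; rewrite /= scalerDl. Qed.

HB.instance Definition _ := GRing.Zmodule_isLmodule.Build K fps
  fps_scaleA fps_scale1 fps_scaleDr fps_scaleDl.

Lemma fcoefD f g n : fcoef (f + g) n = fcoef f n + fcoef g n. Proof. by []. Qed.
Lemma fcoefZ c f n : fcoef (c *: f) n = c *: fcoef f n. Proof. by []. Qed.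
Lemma fcoefM f g n :
  fcoef (f * g) n = \sum_(i < n.+1) fcoef f i * fcoef g (n - i). Proof. by []. Qed.

Lemma fps_mulE (f g : ps A) : FPS (ps_mul f g) = FPS f * FPS g.
Proof. by []. Qed.

Lemma fcoef_sum I r (P : pred I) (F : I -> fps) n :
  fcoef (\sum_(i <- r | P i) F i) n = \sum_(i <- r | P i) fcoef (F i) n.
Proof.
elim: r => [|a r IH]; first by rewrite !big_nil.
by rewrite !big_cons; case: (P a); rewrite ?fcoefD IH.
Qed.

Lemma fps_scalerAl c (f g : fps) : c *: (f * g) = c *: f * g.
Proof.
apply: fps_ext => n; rewrite fcoefZ !fcoefM scaler_sumr.
by apply: eq_bigr => i _; rewrite fcoefZ scalerAl.
Qed.

Lemma fps_scalerAr c (f g : fps) : c *: (f * g) = f * (c *: g).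
Proof.
apply: fps_ext => n; rewrite fcoefZ !fcoefM scaler_sumr.
by apply: eq_bigr => i _; rewrite fcoefZ scalerAr.
Qed.

Lemma fps_oner_neq0 : 1 != 0 :> fps.
Proof. by apply/eqP => /(congr1 (fcoef^~ 0%N)) /eqP; rewrite oner_eq0. Qed.

HB.instance Definition _ := GRing.PzSemiRing_isNonZero.Build fps fps_oner_neq0.
HB.instance Definition _ := GRing.Lmodule_isLalgebra.Build K fps fps_scalerAl.
HB.instance Definition _ := GRing.Lalgebra_isAlgebra.Build K fps fps_scalerAr.

End FormalPowerSeries.
Arguments fcoef {K A}.

Lemma sum_antidiag (V : zmodType) M (D : nat -> nat -> V) :
    (forall a b, (M <= a + b)%N -> D a b = 0) ->
  \sum_(j < M) \sum_(i < j.+1) D (j - i)%N i = \sum_(a < M) \sum_(b < M) D a b.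
Proof.
move=> D0.
have widen (j : 'I_M) : \sum_(i < j.+1) D (j - i)%N i =
    \sum_(i < M) (if (i <= j)%N then D (j - i)%N i else 0).
  by rewrite (big_ord_widen M (fun i => D (j - i)%N i)) // big_mkcond.
rewrite (eq_bigr _ (fun j _ => widen j)) exchange_big [RHS]exchange_big /=.
apply: eq_bigr => -[i /= lt_iM] _.
rewrite -(big_mkord xpredT (fun j => if (i <= j)%N then D (j - i)%N i else 0)).
rewrite -(big_mkord xpredT (fun a => D a i)) (big_cat_nat (n := i)) ?(ltnW lt_iM) //=.
rewrite big1_seq ?add0r => [|j /andP[_]]; last first.
  by rewrite mem_index_iota => /andP[_ lt_ji]; rewrite leqNgt lt_ji.
rewrite -[in LHS](add0n i) big_addn [RHS](big_cat_nat (n := (M - i)%N)) ?leq_subr //=.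
rewrite [X in _ = _ + X]big1_seq ?addr0 => [|a /andP[_]]; last first.
  by rewrite mem_index_iota => /andP[le_a _]; apply: D0; lia.
by apply: eq_big_nat => a _; rewrite leq_addl addnK.
Qed.

Section Exponential.
Variables (K : numFieldType) (A : algType K).
Local Notation fps := (fps A).

Definition cst (a : A) : fps := FPS (ps_const a).
Definition xi : fps := FPS (ps_shift (ps_one A)).

Lemma fcoef_cstMl a (g : fps) n : fcoef (cst a * g) n = a * fcoef g n.
Proof. by rewrite fcoefM big_ord_recl big1 ?addr0 ?subn0 // => i _; rewrite mul0r. Qed.

Lemma fcoef_cstMr a (g : fps) n : fcoef (g * cst a) n = fcoef g n * a.
Proof.
rewrite fcoefM big_ord_recr big1 /= ?add0r ?subnn // => i _.
by rewrite /ps_const subn_eq0 leqNgt ltn_ord mulr0.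
Qed.

Lemma cstM a b : cst (a * b) = cst a * cst b.
Proof. by apply: fps_ext => n; rewrite fcoef_cstMl /= /ps_const; case: eqP; rewrite ?mulr0. Qed.

Lemma cstD a b : cst (a + b) = cst a + cst b.
Proof. by apply: fps_ext => n; rewrite /= /ps_const; case: eqP; rewrite ?addr0. Qed.

Lemma cstZ (c : K) a : cst (c *: a) = c *: cst a.
Proof. by apply: fps_ext => n; rewrite /= /ps_const; case: eqP; rewrite ?scaler0. Qed.

Lemma fps_lmulE a (f : fps) : FPS (ps_lmul a (fcoef f)) = cst a * f.
Proof. by apply: fps_ext => n; rewrite fcoef_cstMl. Qed.

Lemma fcoef_xiMl (g : fps) n : fcoef (xi * g) n = if n is n'.+1 then fcoef g n' else 0.
Proof.
rewrite fcoefM; case: n => [|n]; first by rewrite big_ord1 mul0r.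
rewrite big_ord_recl mul0r add0r big_ord_recl mul1r subn1 big1 ?addr0 // => i _.
by rewrite mul0r.
Qed.

Lemma fcoef_xiMr (g : fps) n : fcoef (g * xi) n = if n is n'.+1 then fcoef g n' else 0.
Proof.
rewrite fcoefM; case: n => [|n]; first by rewrite big_ord1 mulr0.
rewrite big_ord_recr /= subnn mulr0 addr0 big_ord_recr /= subSnn mulr1.
rewrite big1 ?add0r // => i _.
by rewrite subSn 1?ltnW //= /ps_one subn_eq0 leqNgt ltn_ord mulr0.
Qed.

Lemma xiC (g : fps) : xi * g = g * xi.
Proof. by apply: fps_ext => n; rewrite fcoef_xiMl fcoef_xiMr. Qed.

Lemma fps_shiftE (f : fps) : FPS (ps_shift (fcoef f)) = xi * f.
Proof. by apply: fps_ext => n; rewrite fcoef_xiMl. Qed.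

Definition vanish_lt (p : nat) (f : fps) := forall i, (i < p)%N -> fcoef f i = 0.

Lemma vanish_ltD p (f g : fps) : vanish_lt p f -> vanish_lt p g -> vanish_lt p (f + g).
Proof. by move=> vf vg i lt_ip; rewrite fcoefD vf ?vg ?addr0. Qed.

Lemma vanish_ltZ p c (f : fps) : vanish_lt p f -> vanish_lt p (c *: f).
Proof. by move=> vf i lt_ip; rewrite fcoefZ vf ?scaler0. Qed.

Lemma vanish_ltM p q (f g : fps) :
  vanish_lt p f -> vanish_lt q g -> vanish_lt (p + q) (f * g).
Proof.
move=> vf vg i lt_i; rewrite fcoefM big1 // => j _.
have [lt_jp|le_pj] := ltnP j p; first by rewrite vf // mul0r.
by rewrite vg ?mulr0 //; have := ltn_ord j; lia.
Qed.

Lemma vanish_ltX (f : fps) m : vanish_lt 1 f -> vanish_lt m (f ^+ m).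
Proof.
move=> vf; elim: m => [|m IH]; first by [].
by rewrite exprS -add1n; apply: vanish_ltM.
Qed.

Lemma vanish_lt1_xiM (f : fps) : vanish_lt 1 (xi * f).
Proof. by case=> // _; rewrite fcoef_xiMl. Qed.

Lemma vanish_lt1_cstM a (f : fps) : vanish_lt 1 f -> vanish_lt 1 (cst a * f).
Proof. by move=> vf [|//] _; rewrite fcoef_cstMl vf ?mulr0. Qed.

Lemma ps_powE (f : fps) m : ps_pow (fcoef f) m = fcoef (f ^+ m).
Proof. by elim: m => [|m IH] //=; rewrite exprS /= IH. Qed.

Definition fexp (f : fps) : fps := FPS (ps_exp (fcoef f)).
Definition exp_trunc (M : nat) (f : fps) : fps := \sum_(m < M) (m`!%:R)^-1 *: f ^+ m.

Lemma fcoef_exp_trunc (f : fps) M n : vanish_lt 1 f -> (n < M)%N ->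
  fcoef (exp_trunc M f) n = fcoef (fexp f) n.
Proof.
move=> vf lt_nM; rewrite fcoef_sum -(subnKC lt_nM) big_split_ord /=.
rewrite [X in _ + X]big1 ?addr0 => [|i _]; last first.
  by rewrite vanish_ltX ?scaler0 // ltnS leq_addr.
by apply: eq_bigr => m _; rewrite ps_powE.
Qed.

Lemma fcoefM_low (f f' g g' : fps) n :
    (forall i, (i <= n)%N -> fcoef f i = fcoef f' i) ->
    (forall i, (i <= n)%N -> fcoef g i = fcoef g' i) ->
  fcoef (f * g) n = fcoef (f' * g') n.
Proof.
move=> ef eg; rewrite !fcoefM; apply: eq_bigr => i _.
by rewrite ef 1?eg ?leq_subr // -ltnS.
Qed.

Lemma fcoef_fexpMl (f g : fps) n : vanish_lt 1 f ->
  fcoef (fexp f * g) n = fcoef (exp_trunc n.+1 f * g) n.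
Proof. by move=> vf; apply: fcoefM_low => // i le_in; rewrite fcoef_exp_trunc. Qed.

Lemma fcoef_fexpMr (f g : fps) n : vanish_lt 1 f ->
  fcoef (g * fexp f) n = fcoef (g * exp_trunc n.+1 f) n.
Proof. by move=> vf; apply: fcoefM_low => // i le_in; rewrite fcoef_exp_trunc. Qed.

Lemma fact_neq0 m : (m`!%:R : K) != 0.
Proof. by rewrite pnatr_eq0 -lt0n fact_gt0. Qed.

Lemma fexpD (f g : fps) : GRing.comm f g -> vanish_lt 1 f -> vanish_lt 1 g ->
  fexp (f + g) = fexp f * fexp g.
Proof.
move=> cfg vf vg; apply: fps_ext => n.
rewrite -(@fcoef_exp_trunc _ n.+1 _ (vanish_ltD vf vg)) // fcoef_fexpMl // fcoef_fexpMr //.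
pose D a b := ((a`!%:R)^-1 * (b`!%:R)^-1 : K) *: fcoef (f ^+ a * g ^+ b) n.
have D0 a b : (n.+1 <= a + b)%N -> D a b = 0.
  move=> le_n; have vfg := vanish_ltM (vanish_ltX (m := a) vf) (vanish_ltX (m := b) vg).
  by rewrite /D vfg ?scaler0.
transitivity (\sum_(j < n.+1) \sum_(i < j.+1) D (j - i)%N i).
  rewrite fcoef_sum; apply: eq_bigr => j _.
  rewrite fcoefZ (exprDn_comm _ cfg) fcoef_sum scaler_sumr; apply: eq_bigr => i _.
  have le_ij : (i <= j)%N by rewrite -ltnS.
  rewrite /D -scaler_nat fcoefZ scalerA; congr (_ *: _).
  have := congr1 (fun m => m%:R : K) (bin_fact le_ij); rewrite !natrM => /(canRL (mulfK _)).
  move=> /(_ (mulf_neq0 (fact_neq0 _) (fact_neq0 _))) ->.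
  by field; rewrite !fact_neq0.
rewrite (sum_antidiag D0) mulr_suml fcoef_sum; apply: eq_bigr => a _.
rewrite mulr_sumr fcoef_sum; apply: eq_bigr => b _.
by rewrite -scalerAl -scalerAr scalerA fcoefZ.
Qed.

Lemma conj_expr (W f g : fps) m : W * f = g * W -> W * f ^+ m = g ^+ m * W.
Proof.
move=> conj; elim: m => [|m IH]; first by rewrite !expr0 mulr1 mul1r.
by rewrite exprS mulrA conj -mulrA IH mulrA -exprS.
Qed.

Lemma conj_fexp (W f g : fps) : W * f = g * W -> vanish_lt 1 f -> vanish_lt 1 g ->
  W * fexp f = fexp g * W.
Proof.
move=> conj vf vg; apply: fps_ext => n.
rewrite fcoef_fexpMl // fcoef_fexpMr // mulr_sumr mulr_suml !fcoef_sum.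
by apply: eq_bigr => m _; rewrite -scalerAr -scalerAl (conj_expr _ conj).
Qed.

Lemma fexp_comm (f g : fps) : GRing.comm f g -> vanish_lt 1 f -> vanish_lt 1 g ->
  GRing.comm (fexp f) (fexp g).
Proof.
move=> cfg vf vg; apply: conj_fexp => //.
by apply/esym/conj_fexp.
Qed.

End Exponential.
Arguments xi {K A}.

Section Derivative.
Variables (K : numFieldType) (A : algType K).
Local Notation fps := (fps A).

Definition fderiv (f : fps) : fps := FPS (fun n => n.+1%:R *: fcoef f n.+1).

Lemma fcoef_fderiv (f : fps) n : fcoef (fderiv f) n = n.+1%:R *: fcoef f n.+1.
Proof. by []. Qed.

Lemma fderivD (f g : fps) : fderiv (f + g) = fderiv f + fderiv g.
Proof. by apply: fps_ext => n; rewrite /= scalerDr. Qed.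

Lemma fderivZ c (f : fps) : fderiv (c *: f) = c *: fderiv f.
Proof. by apply: fps_ext => n; rewrite /= !scalerA mulrC. Qed.

Lemma fderiv1 : fderiv 1 = 0.
Proof. by apply: fps_ext => n; rewrite /= scaler0. Qed.

Lemma fderiv_sum I (r : seq I) (F : I -> fps) :
  fderiv (\sum_(i <- r) F i) = \sum_(i <- r) fderiv (F i).
Proof.
elim: r => [|a r IH]; last by rewrite !big_cons fderivD IH.
by rewrite !big_nil; apply: fps_ext => n; rewrite /= scaler0.
Qed.

Lemma fderivM (f g : fps) : fderiv (f * g) = fderiv f * g + f * fderiv g.
Proof.
apply: fps_ext => n; rewrite fcoefD.
set P := trunc_poly n.+1 f; set Q := trunc_poly n.+1 g.
have eP := coef_trunc_poly_le f (leqnn n.+1).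
have eQ := coef_trunc_poly_le g (leqnn n.+1).
have eP' : {in [pred i | i <= n]%N, forall i, P^`()`_i = fcoef (fderiv f) i}.
  by move=> i /[!inE] le_in; rewrite coef_deriv eP ?inE //= scaler_nat.
have eQ' : {in [pred i | i <= n]%N, forall i, Q^`()`_i = fcoef (fderiv g) i}.
  by move=> i /[!inE] le_in; rewrite coef_deriv eQ ?inE //= scaler_nat.
have eP_n := coef_trunc_poly_le f (leqnSn n).
have eQ_n := coef_trunc_poly_le g (leqnSn n).
rewrite -(coef_poly_mul eP' eQ_n) -(coef_poly_mul eP_n eQ') -coefD -derivM.
by rewrite coef_deriv /= scaler_nat (coef_poly_mul eP eQ).
Qed.

Lemma fderivX (f : fps) m : GRing.comm f (fderiv f) ->
  fderiv (f ^+ m) = m%:R *: (f ^+ m.-1 * fderiv f).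
Proof.
move=> cf; elim: m => [|m IH]; first by rewrite expr0 fderiv1 scale0r.
rewrite exprS fderivM IH; case: m IH => [|m] IH.
  by rewrite expr0 mulr1 scale0r mulr0 addr0 scale1r mul1r.
rewrite -scalerAr mulrA -exprS /= (conj_expr m.+1 (esym cf)).
by rewrite -[in RHS]nat1r scalerDl scale1r.
Qed.

Lemma fderiv_fexp (f : fps) : GRing.comm f (fderiv f) -> vanish_lt 1 f ->
  fderiv (fexp f) = fexp f * fderiv f.
Proof.
move=> cf vf; apply: fps_ext => n; rewrite fcoef_fexpMl //.
have -> : fcoef (fderiv (fexp f)) n = fcoef (fderiv (exp_trunc n.+2 f)) n.
  by rewrite /= fcoef_exp_trunc.
rewrite fderiv_sum big_ord_recl fderivZ expr0 fderiv1 scaler0 add0r mulr_suml.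
rewrite !fcoef_sum; apply: eq_bigr => i _.
rewrite fderivZ (fderivX _ cf) -scalerAl scalerA !fcoefZ; congr (_ *: _).
rewrite /= /bump /= add1n factS natrM.
by rewrite invfM mulrAC mulVf ?mul1r // pnatr_eq0.
Qed.

End Derivative.

Section Binomial.
Variables (K : numFieldType) (A : algType K).
Local Notation fps := (fps A).

Definition in_powers (y : A) (f : fps) := forall n, exists c k, fcoef f n = c *: y ^+ k.

Lemma in_powers_comm y (f g : fps) : in_powers y f -> in_powers y g -> GRing.comm f g.
Proof.
move=> yf yg; apply: fps_ext => n; rewrite !fcoefM (reindex_inj rev_ord_inj) /=.
apply: eq_bigr => i _; rewrite subKn; last by rewrite -ltnS.
have [c [k ->]] := yf (n - i)%N; have [d [l ->]] := yg i.
by rewrite -!scalerAl -!scalerAr -!exprD addnC !scalerA mulrC.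
Qed.

Lemma in_powersZ y c (f : fps) : in_powers y f -> in_powers y (c *: f).
Proof. by move=> yf n; have [d [k e]] := yf n; exists (c * d), k; rewrite fcoefZ e scalerA. Qed.

Lemma in_powers_cst y c : in_powers y (cst (c *: y)).
Proof.
case=> [|n]; first by exists c, 1%N; rewrite expr1.
by exists 0, 0%N; rewrite scale0r.
Qed.

Lemma gbinomS (a : K) n : gbinom a n.+1 = gbinom a n * (a - n%:R) / n.+1%:R.
Proof. by rewrite /gbinom big_ord_recr factS natrM invfM /=; ring. Qed.

Section Ln1p.
Variables (nu : K) (y : A).

Definition ln1p : fps := FPS (ps_ln1p nu y).

Lemma in_powers_ln1p : in_powers y ln1p.
Proof. by case=> [|n]; [exists 0, 0%N; rewrite scale0r | eexists; exists n.+1]. Qed.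

Lemma vanish_lt1_ln1p : vanish_lt 1 ln1p.
Proof. by case. Qed.

Lemma fcoef_fderiv_ln1p n : fcoef (fderiv ln1p) n = ((-1) ^+ n * nu ^+ n.+1) *: y ^+ n.+1.
Proof.
rewrite /= /ps_ln1p /= scalerA; congr (_ *: _).
have nS_neq0 : (n.+1%:R : K) != 0 by rewrite pnatr_eq0.
by rewrite mulrC mulfVK // !exprS !mulN1r opprK.
Qed.

Lemma in_powers_fderiv_ln1p : in_powers y (fderiv ln1p).
Proof. by move=> n; rewrite fcoef_fderiv_ln1p; do 2 eexists. Qed.

Lemma fderiv_ln1pE : (1 + xi * cst (nu *: y)) * fderiv ln1p = cst (nu *: y).
Proof.
apply: fps_ext => n; rewrite mulrDl mul1r fcoefD -mulrA fcoef_xiMl.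
case: n => [|n]; first by rewrite fcoef_fderiv_ln1p addr0 expr0 mul1r expr1.
rewrite fcoef_cstMl !fcoef_fderiv_ln1p -scalerAl -scalerAr scalerA -exprS.
by rewrite -scalerDl !exprS [_ + _](_ : _ = 0) ?scale0r //; ring.
Qed.

Definition binom1p (a : K) : fps := FPS (ps_binom a nu y).

(* e = (1 + xi nu y)^a is characterised by e(0) = 1 and (1 + xi nu y) e' = a nu y e *)
Lemma fcoef_fexp_ln1pS (a : K) n :
  n.+1%:R *: fcoef (fexp (a *: ln1p)) n.+1 + (nu *: y) * (n%:R *: fcoef (fexp (a *: ln1p)) n)
  = a *: ((nu *: y) * fcoef (fexp (a *: ln1p)) n).
Proof.
set e := fexp (a *: ln1p).
have vL := vanish_ltZ a vanish_lt1_ln1p.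
have yL := in_powersZ a in_powers_ln1p.
have yuL := in_powers_comm (in_powers_cst y nu) yL.
have deriv_e : fderiv e = e * (a *: fderiv ln1p).
  rewrite -fderivZ fderiv_fexp //; apply: in_powers_comm yL _.
  by rewrite fderivZ; apply/in_powersZ/in_powers_fderiv_ln1p.
have rho_e : (1 + xi * cst (nu *: y)) * e = e * (1 + xi * cst (nu *: y)).
  apply: conj_fexp => //; rewrite mulrDl mulrDr mul1r mulr1 -mulrA yuL.
  by rewrite mulrA xiC -mulrA.
have u_e : cst (nu *: y) * e = e * cst (nu *: y) by apply: conj_fexp.
have ode : (1 + xi * cst (nu *: y)) * fderiv e = a *: (cst (nu *: y) * e).
  by rewrite deriv_e mulrA rho_e -mulrA -scalerAr fderiv_ln1pE -scalerAr -u_e.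
have := congr1 (fun f => fcoef f n) ode.
rewrite mulrDl mul1r fcoefD -mulrA fcoef_xiMl fcoefZ fcoef_cstMl.
case: n => [|n]; rewrite !fcoef_fderiv ?fcoef_cstMl => <-.
  by rewrite scale0r mulr0 !addr0.
by [].
Qed.

Lemma fexp_ln1p (a : K) : fexp (a *: ln1p) = binom1p a.
Proof.
apply: fps_ext; elim=> [|n IH].
  by rewrite /= /ps_exp big_ord1 /ps_binom /gbinom big_ord0 !expr0 mulr1 div1r.
have nS_neq0 : (n.+1%:R : K) != 0 by rewrite pnatr_eq0.
have /(canRL (addrK _)) /(congr1 (fun v => n.+1%:R^-1 *: v)) := fcoef_fexp_ln1pS a n.
rewrite scalerA mulVf // scale1r => ->; rewrite IH /= /ps_binom gbinomS.
rewrite -!scalerAr -!scalerAl !scalerA -exprS -scalerBl scalerA; congr (_ *: _).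
by rewrite exprS; ring.
Qed.

End Ln1p.
End Binomial.

Lemma commrZ (K : numFieldType) (A : algType K) (c : K) (x y : A) :
  GRing.comm x y -> GRing.comm x (c *: y).
Proof. by move=> cxy; rewrite /GRing.comm -scalerAl -scalerAr cxy. Qed.

Section CartanWeights.
Variables (K : numFieldType) (A : algType K) (N : nat) (X : nat -> nat -> A).
Hypothesis hX : gl_rel N X.
Local Notation gl_index i := (0 < i <= N)%N.

Lemma comm_IX (c : A) : (forall s, gl_index s -> GRing.comm c (X s s)) ->
  GRing.comm c (IX N X).
Proof. by move=> cc; rewrite /IX big_nat_cond; apply: commr_sum => s /andP[/cc]. Qed.

Definition ad_weight (D : A) (w : nat -> nat -> K) :=
  forall a b, gl_index a -> gl_index b -> D * X a b = X a b * D + w a b *: X a b.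

Definition diag_weight (j a b : nat) : K := (j == a)%:R - (j == b)%:R.

Lemma ad_weight_diag j : gl_index j -> ad_weight (X j j) (diag_weight j).
Proof.
move=> hj a b ha hb; rewrite -[X j j * X a b](subrK (X a b * X j j)) hX // addrC.
congr (_ + _); rewrite /diag_weight scalerBl (eq_sym b j).
by case: eqP => [->|_]; case: eqP => [->|_]; rewrite ?scale1r ?scale0r.
Qed.

Lemma sum_gl_delta (F : nat -> A) a : gl_index a ->
  \sum_(1 <= s < N.+1) (if s == a then F s else 0) = F a.
Proof. by move=> ha; rewrite -big_mkcond big_nat1_eq ltnS ha. Qed.

Lemma IX_central a b : gl_index a -> gl_index b -> GRing.comm (IX N X) (X a b).
Proof.
move=> ha hb; apply/eqP; rewrite -subr_eq0 /IX mulr_suml mulr_sumr -sumrB.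
rewrite (eq_big_nat _ _ (F2 := fun s =>
    (if s == a then X a b else 0) - (if s == b then X a b else 0))) => [|s hs].
  by rewrite sumrB !sum_gl_delta // subrr.
rewrite hX //; try lia.
by congr (_ - _); [case: eqP => [->|] | rewrite eq_sym; case: eqP => [->|]].
Qed.

Lemma ad_weight_IX : ad_weight (IX N X) (fun _ _ => 0).
Proof. by move=> a b ha hb; rewrite scale0r addr0 IX_central. Qed.

Lemma ad_weightB D1 D2 w1 w2 : ad_weight D1 w1 -> ad_weight D2 w2 ->
  ad_weight (D1 - D2) (fun a b => w1 a b - w2 a b).
Proof.
move=> h1 h2 a b ha hb; rewrite mulrBl mulrBr h1 // h2 // scalerBl.
by rewrite opprD addrACA.
Qed.

Lemma ad_weightZ c D w : ad_weight D w -> ad_weight (c *: D) (fun a b => c * w a b).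
Proof. by move=> h a b ha hb; rewrite -scalerAl -scalerAr h // scalerDr scalerA. Qed.

Lemma ad_weight_HP j : gl_index j -> ad_weight (HP N X j) (diag_weight j).
Proof.
move=> hj a b ha hb.
by rewrite (ad_weightB (ad_weight_diag hj) (ad_weightZ _ ad_weight_IX)) // mulr0 subr0.
Qed.

Definition HR_weight k a b : K :=
  2%:R^-1 * (diag_weight k.+1 a b - diag_weight (N - k) a b) - diag_weight k.+1 a b.

Lemma ad_weight_HR k : gl_index k.+1 -> gl_index (N - k) -> ad_weight (HR N X k) (HR_weight k).
Proof.
move=> hk1 hk2; apply: ad_weightB (ad_weight_HP hk1).
by apply/ad_weightZ/ad_weightB; apply: ad_weight_diag.
Qed.

Definition comm_diag (D : A) := forall i, gl_index i -> GRing.comm D (X i i).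

Lemma ad_weight_comm_diag D w : ad_weight D w -> (forall i, w i i = 0) -> comm_diag D.
Proof. by move=> h w0 i hi; rewrite /GRing.comm h // w0 scale0r addr0. Qed.

Lemma comm_diag_HP D j : comm_diag D -> gl_index j -> GRing.comm D (HP N X j).
Proof.
move=> cD hj; apply: commrB; first exact: cD.
by apply: commrZ; apply: comm_IX.
Qed.

Lemma comm_diag_HR D k : comm_diag D -> gl_index k.+1 -> gl_index (N - k) ->
  GRing.comm D (HR N X k).
Proof.
move=> cD hk1 hk2; apply: commrB (comm_diag_HP cD hk1).
by apply/commrZ/commrB; apply: cD.
Qed.

Lemma HR_comm_diag k : gl_index k.+1 -> gl_index (N - k) -> comm_diag (HR N X k).
Proof.
move=> hk1 hk2; apply: ad_weight_comm_diag (ad_weight_HR hk1 hk2) _ => i.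
by rewrite /HR_weight /diag_weight !subrr mulr0 subrr.
Qed.

End CartanWeights.
Arguments diag_weight {K}.
Arguments HR_weight {K}.

Section Products.
Variables (K : numFieldType) (A : algType K).
Local Notation fps := (fps A).

Lemma comm_cst_ln1p (a y : A) nu : GRing.comm a y -> GRing.comm (cst a) (ln1p nu y).
Proof.
move=> cay; apply: fps_ext => n; rewrite fcoef_cstMl fcoef_cstMr /= /ps_ln1p.
by case: eqP; rewrite ?mulr0 ?mul0r // -scalerAr -scalerAl (commrX n cay).
Qed.

Lemma comm_ln1p (y1 y2 : A) nu1 nu2 : GRing.comm y1 y2 ->
  GRing.comm (ln1p nu1 y1) (ln1p nu2 y2).
Proof.
move=> cy; apply: fps_ext => n; rewrite !fcoefM (reindex_inj rev_ord_inj) /=.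
apply: eq_bigr => i _; rewrite subKn /ps_ln1p; last by rewrite -ltnS.
case: eqP; rewrite ?mulr0 ?mul0r //; case: eqP; rewrite ?mulr0 ?mul0r // => _ _.
rewrite -!scalerAr -!scalerAl !scalerA mulrC; congr (_ *: _).
exact/commrX/commr_sym/commrX.
Qed.

Lemma comm_cstM_ln1p (h1 h2 y1 y2 : A) nu1 nu2 :
    GRing.comm h1 h2 -> GRing.comm h1 y2 -> GRing.comm h2 y1 -> GRing.comm y1 y2 ->
  GRing.comm (cst h1 * ln1p nu1 y1) (cst h2 * ln1p nu2 y2).
Proof.
move=> c12 c1 c2 cy.
have E (g1 g2 z1 z2 : A) (n1 n2 : K) : GRing.comm g2 z1 ->
    cst g1 * ln1p n1 z1 * (cst g2 * ln1p n2 z2) = cst (g1 * g2) * (ln1p n1 z1 * ln1p n2 z2).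
  by move=> c; rewrite cstM -!mulrA; congr (_ * _); rewrite !mulrA (comm_cst_ln1p _ c).
by rewrite /GRing.comm !E // c12 (comm_ln1p _ _ cy).
Qed.

Lemma conj_prod (W : fps) r (F G : nat -> fps) :
    (forall s, s \in r -> W * F s = G s * W) ->
  W * \prod_(s <- r) F s = \prod_(s <- r) G s * W.
Proof.
elim: r => [|s r IH] conj; first by rewrite !big_nil mulr1 mul1r.
rewrite !big_cons mulrA conj ?mem_head // -mulrA IH ?mulrA // => t rt.
by apply: conj; rewrite in_cons rt orbT.
Qed.

Lemma ps_prodE r (G : nat -> ps A) : FPS (ps_prod r G) = \prod_(s <- r) FPS (G s).
Proof. by elim: r => [|s r IH]; rewrite ?big_nil ?big_cons // -IH. Qed.

End Products.

Lemma prod_rev_factor (R : pzRingType) (F Rf Pf : nat -> R) q :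
    (forall k, (k <= q)%N -> F k = Rf k * Pf k) ->
    (forall k l, (k <= q)%N -> (l <= q)%N -> GRing.comm (Rf k) (Rf l)) ->
    (forall k l, (k < l <= q)%N -> GRing.comm (Rf k) (Pf l)) ->
  \prod_(k <- rev (iota 0 q.+1)) F k =
    \prod_(k <- iota 0 q.+1) Rf k * \prod_(k <- rev (iota 0 q.+1)) Pf k.
Proof.
elim: q => [|q IH] eF cR cRP; first by rewrite /= !big_seq1 eF.
rewrite -addn1 iotaD add0n cats1 rev_rcons big_rcons.
rewrite [in LHS]big_cons [X in _ = _ * X]big_cons IH; last 3 first.
- by move=> k le_kq; apply: eF; rewrite ltnW.
- by move=> k l le_kq le_lq; apply: cR; rewrite ltnW.
- by move=> k l /andP[lt_kl le_lq]; apply: cRP; rewrite lt_kl ltnW.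
have prod_comm (x : R) : (forall k, (k <= q)%N -> GRing.comm (Rf k) x) ->
    GRing.comm (\prod_(k <- iota 0 q.+1) Rf k) x.
  move=> cx; apply/commr_sym; rewrite big_seq; apply: commr_prod => k.
  by rewrite mem_iota => /andP[_ lt_k]; apply/commr_sym/cx.
have cRq := prod_comm _ (fun k le_kq => cR k q.+1 (leqW le_kq) (leqnn _)).
have cPq : GRing.comm (\prod_(k <- iota 0 q.+1) Rf k) (Pf q.+1).
  by apply: prod_comm => k le_kq; apply: cRP; rewrite ltnS le_kq /=.
by rewrite eF // -!mulrA (mulrA (Pf _)) -cPq !mulrA -cRq.
Qed.

Lemma comm_gl_rel (K : numFieldType) (A : algType K) N (E : nat -> nat -> A) a b c d :
    gl_rel N E -> (0 < a <= N)%N -> (0 < b <= N)%N -> (0 < c <= N)%N -> (0 < d <= N)%N ->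
  b != c -> d != a -> GRing.comm (E a b) (E c d).
Proof.
move=> hE ha hb hc hd /negPf bc /negPf da; apply/eqP; rewrite -subr_eq0 hE //.
by rewrite bc da subrr.
Qed.

Section Links.
Variables (K : numFieldType) (A : algType K) (N : nat) (X Y : nat -> nat -> A).
Hypotheses (hX : gl_rel N X) (hY : gl_rel N Y) (hXY : fam_commute N X Y).
Local Notation gl_index i := (0 < i <= N)%N.
Local Notation fps := (fps A).

Definition Yk k := Y k.+1 (N - k).
Definition sigma k nu : fps := ln1p nu (Yk k).
Definition exp_sigma (H : A) k nu : fps := fexp (cst H * sigma k nu).
Definition root_elt k nu s := nu *: (X k.+1 s * Y s (N - k)).
Definition periph_factor k nu s : fps := fexp (xi * cst (root_elt k nu s)).
Definition jordan_factor k nu s : fps :=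
  fexp (xi * (cst (root_elt k nu s) * binom1p nu (Yk k) (- 2%:R^-1))).
Definition link_range k := iota (k + 2) (N - k - (k + 2)).
Definition periph_link k nu : fps :=
  \prod_(s <- link_range k) periph_factor k nu s * exp_sigma (HP N X k.+1) k nu.

Lemma exp_H_sigmaE H k nu : FPS (exp_H_sigma N Y H k nu) = exp_sigma H k nu.
Proof. by rewrite /exp_sigma -fps_lmulE. Qed.

Lemma FP_linkE k nu : FPS (FP_link N X Y k nu) = periph_link k nu.
Proof.
rewrite /FP_link fps_mulE ps_prodE exp_H_sigmaE.
by congr (_ * _); apply: eq_bigr => s _; rewrite /periph_factor -fps_shiftE.
Qed.

Lemma F_linkE k nu : FPS (F_link N X Y k nu) =
  \prod_(s <- link_range k) jordan_factor k nu s * exp_sigma (Hc N X k) k nu.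
Proof.
rewrite /F_link fps_mulE ps_prodE exp_H_sigmaE.
by congr (_ * _); apply: eq_bigr => s _; rewrite /jordan_factor -fps_shiftE -fps_lmulE.
Qed.

Lemma comm_Y_HP a b j : gl_index a -> gl_index b -> gl_index j ->
  GRing.comm (Y a b) (HP N X j).
Proof.
move=> ha hb hj; apply: commrB; first exact/commr_sym/hXY.
by apply: commrZ; apply: comm_IX => s hs; apply/commr_sym/hXY.
Qed.

Lemma comm_Y_HR a b k : gl_index a -> gl_index b -> gl_index k.+1 -> gl_index (N - k) ->
  GRing.comm (Y a b) (HR N X k).
Proof.
move=> ha hb hk1 hk2; apply: commrB (comm_Y_HP ha hb hk1).
by apply/commrZ/commrB; apply/commr_sym/hXY.
Qed.

Lemma comm_root_elt_Yk l k nu s :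
    gl_index l.+1 -> gl_index s -> gl_index (N - l) -> gl_index k.+1 -> gl_index (N - k) ->
    (N - l != k.+1)%N -> (N - k != s)%N ->
  GRing.comm (root_elt l nu s) (Yk k).
Proof.
move=> hl1 hs hl2 hk1 hk2 lk ks; apply/commr_sym/commrZ/commrM.
  exact/commr_sym/hXY.
by rewrite /Yk; apply: (comm_gl_rel hY).
Qed.

Lemma HR_root_elt k l nu s :
    gl_index k.+1 -> gl_index (N - k) -> gl_index l.+1 -> gl_index s -> gl_index (N - l) ->
  HR N X k * root_elt l nu s =
    root_elt l nu s * HR N X k + HR_weight N k l.+1 s *: root_elt l nu s.
Proof.
move=> hk1 hk2 hl1 hs hl2.
rewrite /root_elt -scalerAr -scalerAl scalerA [_ * nu]mulrC -scalerA -scalerDr.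
rewrite mulrA (ad_weight_HR hX) // mulrDl -!mulrA -(comm_Y_HR hs hl2 hk1 hk2).
by rewrite -scalerAl.
Qed.

Lemma vanish_lt1_cstM_sigma (H : A) k nu : vanish_lt 1 (cst H * sigma k nu).
Proof. exact/vanish_lt1_cstM/vanish_lt1_ln1p. Qed.

Section Link.
Variable k : nat.
Hypothesis k_half : (2 * k.+1 <= N)%N.

Let hk1 : gl_index k.+1. Proof. lia. Qed.
Let hk2 : gl_index (N - k). Proof. lia. Qed.

Lemma comm_HR_Yk : GRing.comm (HR N X k) (Yk k).
Proof. exact/commr_sym/comm_Y_HR. Qed.

Lemma exp_sigma_Hc nu :
  exp_sigma (Hc N X k) k nu = exp_sigma (HR N X k) k nu * exp_sigma (HP N X k.+1) k nu.
Proof.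
have comm_HR_HP : GRing.comm (cst (HR N X k) * sigma k nu) (cst (HP N X k.+1) * sigma k nu).
  apply: comm_cstM_ln1p; [exact: comm_diag_HP (HR_comm_diag hX hk1 hk2) hk1|
    exact: comm_HR_Yk| exact/commr_sym/comm_Y_HP | exact: commr_refl].
have vHR := vanish_lt1_cstM_sigma (HR N X k) k nu.
have vHP := vanish_lt1_cstM_sigma (HP N X k.+1) k nu.
by rewrite /exp_sigma -(fexpD comm_HR_HP vHR vHP) -mulrDl -cstD /HR subrK.
Qed.

Lemma HR_root_elt_self nu s : s \in link_range k ->
  HR N X k * root_elt k nu s = root_elt k nu s * HR N X k + (- 2%:R^-1) *: root_elt k nu s.
Proof.
rewrite mem_iota => hs.
have [ks Nk Nks] : [/\ k.+1 != s, N - k != k.+1 & N - k != s]%N.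
  by split; apply/eqP; lia.
rewrite HR_root_elt //; last by lia.
rewrite /HR_weight /diag_weight eqxx (negPf ks) (negPf Nk) (negPf Nks).
by congr (_ + _ *: _) => /=; field.
Qed.

Lemma conj_periph_factor nu s : s \in link_range k ->
  exp_sigma (HR N X k) k nu * periph_factor k nu s =
    jordan_factor k nu s * exp_sigma (HR N X k) k nu.
Proof.
move=> hs; have hs1 : gl_index s by move: hs; rewrite mem_iota; lia.
set c : K := - 2%:R^-1; set Z := root_elt k nu s; set W := exp_sigma (HR N X k) k nu.
set L := sigma k nu; set B := binom1p nu (Yk k) c.
have cZL : GRing.comm (cst Z) L.
  apply/comm_cst_ln1p/comm_root_elt_Yk => //; apply/eqP; move: hs; rewrite mem_iota; lia.
have vcL : vanish_lt 1 (c *: L) := vanish_ltZ c (vanish_lt1_ln1p nu (Yk k)).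
have vHL := vanish_lt1_cstM_sigma (HR N X k) k nu.
have conj_Z : cst Z * (c *: L + cst (HR N X k) * L) = cst (HR N X k) * L * cst Z.
  have cZ_L : cst (c *: Z) * L = c *: (cst Z * L) by rewrite cstZ scalerAl.
  rewrite mulrDr -scalerAr mulrA -cstM -mulrA -cZL mulrA -cstM HR_root_elt_self //.
  by rewrite -/c -/Z cstD mulrDl cZ_L addrC.
have expB : fexp (c *: L + cst (HR N X k) * L) = B * W.
  rewrite fexpD // ?fexp_ln1p //.
  apply/commr_sym/commrZ/commr_sym/commrM; last exact: commr_refl.
  exact/commr_sym/comm_cst_ln1p/comm_HR_Yk.
have conj_BW : cst Z * (B * W) = W * cst Z.
  by rewrite -expB; apply: conj_fexp => //; apply: vanish_ltD.
apply: conj_fexp; [|exact: vanish_lt1_xiM..].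
by rewrite mulrA -xiC -!mulrA conj_BW.
Qed.

Lemma link_factorization nu :
  FPS (F_link N X Y k nu) = exp_sigma (HR N X k) k nu * periph_link k nu.
Proof.
rewrite F_linkE exp_sigma_Hc mulrA -(conj_prod (F := periph_factor k nu)) ?mulrA //.
exact: conj_periph_factor.
Qed.

End Link.

Section LinkPair.
Variables k l : nat.
Hypotheses (lt_kl : (k < l)%N) (l_half : (2 * l.+1 <= N)%N).

Let hk1 : gl_index k.+1. Proof. lia. Qed.
Let hk2 : gl_index (N - k). Proof. lia. Qed.
Let hl1 : gl_index l.+1. Proof. lia. Qed.
Let hl2 : gl_index (N - l). Proof. lia. Qed.

Lemma comm_exp_sigma_HR_HP nuk nul :
  GRing.comm (exp_sigma (HR N X k) k nuk) (exp_sigma (HP N X l.+1) l nul).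
Proof.
apply: fexp_comm; try exact: vanish_lt1_cstM_sigma.
apply: comm_cstM_ln1p.
- exact: comm_diag_HP (HR_comm_diag hX hk1 hk2) hl1.
- exact/commr_sym/comm_Y_HR.
- exact/commr_sym/comm_Y_HP.
- by apply: (comm_gl_rel hY) => //; apply/eqP; lia.
Qed.

Lemma comm_HR_root_elt nu s : s \in link_range l ->
  GRing.comm (HR N X k) (root_elt l nu s).
Proof.
rewrite mem_iota => hs.
have [kl ks Nkl Nks] : [/\ k.+1 != l.+1, k.+1 != s, N - k != l.+1 & N - k != s]%N.
  by split; apply/eqP; lia.
rewrite /GRing.comm HR_root_elt //; try lia.
by rewrite /HR_weight /diag_weight (negPf kl) (negPf ks) (negPf Nkl) (negPf Nks) !subrr
  mulr0 subrr scale0r addr0.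
Qed.

Lemma comm_exp_sigma_HR_periph nuk nul s : s \in link_range l ->
  GRing.comm (exp_sigma (HR N X k) k nuk) (periph_factor l nul s).
Proof.
move=> hs; have hs1 : gl_index s by move: hs; rewrite mem_iota; lia.
have cZ : GRing.comm (cst (root_elt l nul s)) (sigma k nuk).
  apply/comm_cst_ln1p/comm_root_elt_Yk => //; apply/eqP; move: hs; rewrite mem_iota; lia.
apply: fexp_comm; try exact: vanish_lt1_cstM_sigma; try exact: vanish_lt1_xiM.
rewrite /GRing.comm mulrA -xiC -!mulrA; congr (_ * _).
by rewrite -cZ !mulrA -!cstM comm_HR_root_elt.
Qed.

Lemma comm_exp_sigma_periph_link nuk nul :
  GRing.comm (exp_sigma (HR N X k) k nuk) (periph_link l nul).
Proof.
apply: commrM; last exact: comm_exp_sigma_HR_HP.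
rewrite /GRing.comm (conj_prod (G := periph_factor l nul)) // => s rs.
exact: comm_exp_sigma_HR_periph.
Qed.

End LinkPair.

Lemma comm_exp_sigma_HR k l nuk nul : (2 * k.+1 <= N)%N -> (2 * l.+1 <= N)%N ->
  GRing.comm (exp_sigma (HR N X k) k nuk) (exp_sigma (HR N X l) l nul).
Proof.
move=> k_half l_half.
have [hk1 hk2 hl1 hl2] : [/\ gl_index k.+1, gl_index (N - k), gl_index l.+1 & gl_index (N - l)].
  by split; lia.
apply: fexp_comm; try exact: vanish_lt1_cstM_sigma.
apply: comm_cstM_ln1p.
- exact: comm_diag_HR (HR_comm_diag hX hk1 hk2) hl1 hl2.
- exact/commr_sym/comm_Y_HR.
- exact/commr_sym/comm_Y_HR.
- by apply: (comm_gl_rel hY) => //; apply/eqP; lia.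
Qed.

End Links.

Theorem mainTheorem1 (K : numFieldType) (A : algType K) (N : nat)
  (X Y : nat -> nat -> A)
  (hX : gl_rel N X) (hY : gl_rel N Y) (hXY : fam_commute N X Y)
  (p : nat) (nu : nat -> K)
  (hN : (3 <= N)%N) (hp : (p <= N./2 - 1)%N) :
  (forall k, (k <= p)%N ->
     F_link N X Y k (nu k.+1) =
     ps_mul (exp_H_sigma N Y (HR N X k) k (nu k.+1)) (FP_link N X Y k (nu k.+1)))
  /\
  F_chain N X Y p nu =
    ps_mul (ps_prod (iota 0 p.+1)
              (fun k => exp_H_sigma N Y (HR N X k) k (nu k.+1)))
           (FP_chain N X Y p nu)
  /\
  (forall k l, (k <= p)%N -> (l <= p)%N ->
     ps_mul (exp_H_sigma N Y (HR N X k) k (nu k.+1))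
            (exp_H_sigma N Y (HR N X l) l (nu l.+1)) =
     ps_mul (exp_H_sigma N Y (HR N X l) l (nu l.+1))
            (exp_H_sigma N Y (HR N X k) k (nu k.+1))).
Proof.
have half k : (k <= p)%N -> (2 * k.+1 <= N)%N.
  by have := odd_double_half N; lia.
pose F k := FPS (F_link N X Y k (nu k.+1)).
pose R k := FPS (exp_H_sigma N Y (HR N X k) k (nu k.+1)).
pose P k := FPS (FP_link N X Y k (nu k.+1)).
have link k : (k <= p)%N -> F k = R k * P k.
  by move=> le_kp; rewrite /F /R /P exp_H_sigmaE FP_linkE link_factorization ?half.
have commR k l : (k <= p)%N -> (l <= p)%N -> GRing.comm (R k) (R l).
  by move=> le_kp le_lp; rewrite /R !exp_H_sigmaE; apply: comm_exp_sigma_HR; rewrite ?half.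
have commRP k l : (k < l <= p)%N -> GRing.comm (R k) (P l).
  move=> /andP[lt_kl le_lp]; rewrite /R /P exp_H_sigmaE FP_linkE.
  by apply: comm_exp_sigma_periph_link; rewrite ?half.
split; first by move=> k /link /(congr1 fcoef).
split; last by move=> k l le_kp le_lp; have /(congr1 fcoef) := commR k l le_kp le_lp.
have /(congr1 fcoef) := prod_rev_factor link commR commRP.
by rewrite -!ps_prodE.
Qed.
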